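(* Let $X$ be a fixed $n\times n$ matrix and set $$Z=\sum_{a,b}X_{ab}\,\langle\mathcal{P}_T(e_ae_b^* ),e_ae_b^*\rangle\,e_ae_b^* .$$ Then $\|Z\|\le\frac{2\mu_0r}{n}\|X\|$.
   Context: $U,V\subseteq\mathbb{R}^n$ are $r$-dimensional subspaces with orthogonal projections $P_U,P_V$, with coherences $\mu(U),\mu(V)\le\mu_0$, where $\mu(W)=\frac nr\max_i\|P_We_i\|^2$. $\mathcal{P}_T(Y)=P_UY+YP_V-P_UYP_V$. $e_a$ are standard basis vectors, $\langle A,B\rangle=\mathrm{trace}(A^*B)$, and $\|\cdot\|$ is the spectral norm. *)

From HB Require Import structures.
From mathcomp Require Import all_boot all_order all_algebra.
Set Implicit Arguments. Unset Strict Implicit. Unset Printing Implicit Defensive.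
Import Order.TTheory GRing.Theory Num.Theory.
Local Open Scope ring_scope.

Section Defs.
Variable R : rcfType.

Definition vnorm n (x : 'cV[R]_n) : R := Num.sqrt (\sum_(i < n) x i 0 ^+ 2).

Definition evec n (i : 'I_n) : 'cV[R]_n := delta_mx i 0.

Definition orth_proj_rank n (r : nat) (P : 'M[R]_n) : Prop :=
  [/\ P^T = P, P *m P = P & \rank P = r].

Definition coherence n (r : nat) (P : 'M[R]_n) : R :=
  (n%:R / r%:R) * \big[Num.max/0]_(i < n) (vnorm (P *m evec i)) ^+ 2.

Definition PT n (PU PV Y : 'M[R]_n) : 'M[R]_n :=
  PU *m Y + Y *m PV - PU *m Y *m PV.

Definition mx_inner n (A B : 'M[R]_n) : R := \tr (A^T *m B).

Definition op_bound n (A : 'M[R]_n) (c : R) : Prop :=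
  forall x : 'cV[R]_n, vnorm (A *m x) <= c * vnorm x.
Definition is_spec_norm n (A : 'M[R]_n) (s : R) : Prop :=
  op_bound A s /\ forall c, op_bound A c -> s <= c.

Definition Zmx n (PU PV X : 'M[R]_n) : 'M[R]_n :=
  \sum_(a < n) \sum_(b < n)
     (X a b * mx_inner (PT PU PV (delta_mx a b)) (delta_mx a b)) *: delta_mx a b.
End Defs.

(* Since <A, E_ab> = A_ab, the coefficient of E_ab is X_ab (u_a + v_b - u_a v_b)
   with u_a = (P_U)_aa and v_b = (P_V)_bb, so Z factors through diagonal matrices:
     Z = D_u X + (I - D_u) X D_v.
   For an orthogonal projection P, P_aa = |P e_a|^2 lies in [0, 1], and coherence
   gives P_aa <= mu0 r / n =: m.  Operator bounds (Defs.op_bound) add along sums,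
   multiply along products, and a diagonal matrix is bounded by its largest entry
   in absolute value; hence Z has operator bound m ||X|| + 1 * ||X|| * m, and the
   spectral norm of Z, the least such bound, is at most 2 m ||X||. *)

From Pilot Require Import Defs.
From HB Require Import structures.
From mathcomp Require Import all_boot all_order all_algebra ring lra.
Import Order.TTheory GRing.Theory Num.Theory.
Set Implicit Arguments. Unset Strict Implicit. Unset Printing Implicit Defensive.
Local Open Scope ring_scope.

Section EntryFormulas.
Variable R : rcfType.

Lemma mulmx_delta_entry m n p (A : 'M[R]_(m, n)) (a : 'I_n) (b : 'I_p) i j :
  (A *m delta_mx a b) i j = A i a * (j == b)%:R.
Proof.
rewrite mxE (bigD1 a) //= big1 => [|k /negPf nka]; last by rewrite mxE nka mulr0.
by rewrite mxE eqxx addr0.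
Qed.

Lemma delta_mulmx_entry m n p (A : 'M[R]_(n, p)) (a : 'I_m) (b : 'I_n) i j :
  (delta_mx a b *m A) i j = (i == a)%:R * A b j.
Proof.
rewrite mxE (bigD1 b) //= big1 => [|k /negPf nkb]; last by rewrite mxE nkb andbF mul0r.
by rewrite mxE eqxx andbT addr0.
Qed.

Lemma sum_indicator n (F : 'I_n -> R) (j : 'I_n) : \sum_k F k * (k == j)%:R = F j.
Proof.
rewrite (bigD1 j) //= big1 => [|k /negPf nkj]; last by rewrite nkj mulr0.
by rewrite eqxx mulr1 addr0.
Qed.

Lemma mx_inner_delta n (A : 'M[R]_n) a b : mx_inner A (delta_mx a b) = A a b.
Proof.
rewrite /mx_inner /mxtrace.
under eq_bigr do rewrite mulmx_delta_entry mxE.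
exact: sum_indicator.
Qed.

Lemma PT_delta_entry n (PU PV : 'M[R]_n) a b :
  PT PU PV (delta_mx a b) a b = PU a a + PV b b - PU a a * PV b b.
Proof.
rewrite /PT [LHS]mxE [X in X + _]mxE [X in _ + X]mxE.
rewrite mulmx_delta_entry delta_mulmx_entry !eqxx mulr1 mul1r.
by rewrite mxE; under eq_bigr do rewrite mulmx_delta_entry mulrAC; rewrite sum_indicator.
Qed.

Lemma Zmx_diag_decomp n (PU PV X : 'M[R]_n) :
  Zmx PU PV X = diag_mx (\row_i PU i i) *m X
     + diag_mx (\row_i (1 - PU i i)) *m X *m diag_mx (\row_j PV j j).
Proof.
rewrite [RHS]matrix_sum_delta; apply: eq_bigr => a _; apply: eq_bigr => b _.
rewrite mx_inner_delta PT_delta_entry mul_mx_diag !mul_diag_mx !mxE.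
by congr (_ *: _); ring.
Qed.
End EntryFormulas.

Section EuclideanNorm.
Variables (R : rcfType) (n : nat).
Implicit Types (x y : 'cV[R]_n) (u v : 'I_n -> R).

Lemma sumsq_ge0 u : 0 <= \sum_i u i ^+ 2.
Proof. by apply: sumr_ge0 => i _; apply: sqr_ge0. Qed.

Lemma vnorm_ge0 x : 0 <= vnorm x.
Proof. exact: sqrtr_ge0. Qed.

Lemma vnorm_sqr x : vnorm x ^+ 2 = \sum_i x i 0 ^+ 2.
Proof. by rewrite sqr_sqrtr // sumsq_ge0. Qed.

(* Cauchy--Schwarz, via Lagrange's identity: the double sum of the squares
   (u_i v_j - u_j v_i)^2 is nonnegative and equals 2 (A B - S^2). *)
Lemma cauchy_schwarz u v :
  (\sum_i u i * v i) ^+ 2 <= (\sum_i u i ^+ 2) * (\sum_i v i ^+ 2).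
Proof.
set A := \sum_i u i ^+ 2; set B := \sum_i v i ^+ 2; set S := \sum_i u i * v i.
have AB_ij : \sum_i \sum_j (u i * v j) ^+ 2 = A * B.
  rewrite mulr_suml; apply: eq_bigr => i _; rewrite mulr_sumr.
  by apply: eq_bigr => j _; rewrite exprMn.
have AB_ji : \sum_i \sum_j (u j * v i) ^+ 2 = A * B by rewrite exchange_big.
have SS : \sum_i \sum_j (u i * v j) * (u j * v i) = S ^+ 2.
  rewrite expr2 mulr_suml; apply: eq_bigr => i _; rewrite mulr_sumr.
  by apply: eq_bigr => j _; ring.
have lagrange : \sum_i \sum_j (u i * v j - u j * v i) ^+ 2 = A * B - S ^+ 2 *+ 2 + A * B.
  rewrite -{1}AB_ij -AB_ji -SS -sumrMnl -sumrB -big_split; apply: eq_bigr => i _.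
  by rewrite -sumrMnl -sumrB -big_split; apply: eq_bigr => j _; rewrite sqrrB.
have : 0 <= \sum_i \sum_j (u i * v j - u j * v i) ^+ 2.
  by apply: sumr_ge0 => i _; apply: sumsq_ge0.
rewrite lagrange mulr2n; lra.
Qed.

Lemma vnormD x y : vnorm (x + y) <= vnorm x + vnorm y.
Proof.
have cs : \sum_i x i 0 * y i 0 <= vnorm x * vnorm y.
  apply: le_trans (ler_norm _) _.
  rewrite -ler_sqr ?nnegrE ?normr_ge0 ?mulr_ge0 ?vnorm_ge0 //.
  by rewrite real_normK ?num_real // exprMn !vnorm_sqr cauchy_schwarz.
rewrite -ler_sqr ?nnegrE ?addr_ge0 ?vnorm_ge0 // sqrrD !vnorm_sqr.
have -> : \sum_i (x + y) i 0 ^+ 2 =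
    \sum_i x i 0 ^+ 2 + (\sum_i x i 0 * y i 0) *+ 2 + \sum_i y i 0 ^+ 2.
  by rewrite -sumrMnl -!big_split; apply: eq_bigr => i _; rewrite mxE sqrrD.
by rewrite lerD2r lerD2l lerMn2r.
Qed.
End EuclideanNorm.

Section OperatorBounds.
Variables (R : rcfType) (n : nat).
Implicit Types (A B : 'M[R]_n) (a b : R).

Lemma op_boundD A B a b : op_bound A a -> op_bound B b -> op_bound (A + B) (a + b).
Proof.
move=> hA hB x; rewrite mulmxDl mulrDl.
by apply: le_trans (vnormD _ _) _; apply: lerD.
Qed.

Lemma op_boundM A B a b : 0 <= a -> op_bound A a -> op_bound B b ->
  op_bound (A *m B) (a * b).
Proof.
move=> a_ge0 hA hB x; rewrite -mulmxA -mulrA.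
by apply: le_trans (hA _) _; rewrite ler_wpM2l.
Qed.

Lemma op_bound_diag (d : 'rV[R]_n) m : 0 <= m -> (forall i, `|d 0 i| <= m) ->
  op_bound (diag_mx d) m.
Proof.
move=> m_ge0 dm y; rewrite -ler_sqr ?nnegrE ?mulr_ge0 ?vnorm_ge0 //.
rewrite exprMn !vnorm_sqr mulr_sumr; apply: ler_sum => i _.
rewrite mul_diag_mx mxE exprMn ler_wpM2r ?sqr_ge0 //.
by rewrite -real_normK ?num_real // ler_sqr ?nnegrE ?normr_ge0.
Qed.

(* Any operator bound c may be doubled, since c * |x| >= |A x| >= 0;
   so a least operator bound cannot be negative. *)
Lemma op_bound_double A c : op_bound A c -> op_bound A (c + c).
Proof.
move=> hA x; have := hA x; have := vnorm_ge0 (A *m x).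
by rewrite mulrDl; lra.
Qed.

Lemma spec_norm_ge0 A s : is_spec_norm A s -> 0 <= s.
Proof.
by move=> [hA smin]; have := smin _ (op_bound_double hA); lra.
Qed.
End OperatorBounds.

Section Projections.
Variables (R : rcfType) (n : nat).
Implicit Types (P : 'M[R]_n).

(* For a symmetric idempotent P, the diagonal entry P_aa = (P^T P)_aa
   is the squared length of the column P e_a. *)
Lemma proj_diag_sumsq P a : P^T = P -> P *m P = P -> P a a = \sum_i P i a ^+ 2.
Proof.
move=> sym idem; rewrite -{1}idem mxE; apply: eq_bigr => i _.
by rewrite expr2 -{1}sym mxE.
Qed.

Lemma proj_diag_vnorm P a : P^T = P -> P *m P = P ->
  P a a = vnorm (P *m evec R a) ^+ 2.
Proof.
move=> sym idem; rewrite vnorm_sqr proj_diag_sumsq //; apply: eq_bigr => i _.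
by rewrite mulmx_delta_entry eqxx mulr1.
Qed.

Lemma proj_diag_ge0 P a : P^T = P -> P *m P = P -> 0 <= P a a.
Proof. by move=> sym idem; rewrite proj_diag_sumsq ?sumsq_ge0. Qed.

Lemma proj_diag_le1 P a : P^T = P -> P *m P = P -> P a a <= 1.
Proof.
move=> sym idem; have Paa_ge0 := proj_diag_ge0 a sym idem.
have : P a a ^+ 2 <= P a a.
  rewrite [leRHS]proj_diag_sumsq // (bigD1 a) //= lerDl.
  by apply: sumr_ge0 => i _; apply: sqr_ge0.
rewrite expr2; nra.
Qed.

(* Coherence is nonnegative, so mu0 >= 0 in the main lemma. *)
Lemma coherence_ge0 r P : 0 <= coherence r P.
Proof. by rewrite /coherence mulr_ge0 ?divr_ge0 ?ler0n ?bigmax_ge_id. Qed.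

Lemma coherence_col_bound r P a : (0 < r)%N ->
  vnorm (P *m evec R a) ^+ 2 <= coherence r P * r%:R / n%:R.
Proof.
move=> r_gt0; have n_gt0 : (0 < n)%N by case: n a {P} => [[]|].
rewrite /coherence; set M := \big[Num.max/0]_(i < n) _.
have -> : n%:R / r%:R * M * r%:R / n%:R = M.
  by field; rewrite !pnatr_eq0 -!lt0n n_gt0 r_gt0.
exact: le_bigmax.
Qed.
End Projections.

Lemma proj_diag_op_bound (R : rcfType) n r (P : 'M[R]_n) (mu0 : R) : (0 < r)%N ->
  orth_proj_rank r P -> coherence r P <= mu0 ->
  op_bound (diag_mx (\row_i P i i)) (mu0 * r%:R / n%:R).
Proof.
move=> r_gt0 [sym idem _] coh; have mu0_ge0 := le_trans (coherence_ge0 r P) coh.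
apply: op_bound_diag => [|i]; first by rewrite !mulr_ge0 ?invr_ge0 ?ler0n.
rewrite mxE ger0_norm ?proj_diag_ge0 // proj_diag_vnorm //.
apply: le_trans (coherence_col_bound P i r_gt0) _.
by rewrite ler_wpM2r ?invr_ge0 ?ler0n // ler_wpM2r ?ler0n.
Qed.

Lemma proj_codiag_op_bound (R : rcfType) n r (P : 'M[R]_n) :
  orth_proj_rank r P -> op_bound (diag_mx (\row_i (1 - P i i))) 1.
Proof.
move=> [sym idem _]; apply: op_bound_diag => // i.
have := proj_diag_ge0 i sym idem; have := proj_diag_le1 i sym idem.
by rewrite mxE => Pii_le1 Pii_ge0; rewrite ger0_norm; lra.
Qed.

Theorem lemma6p3 (R : rcfType) (n r : nat) (PU PV X : 'M[R]_n) (mu0 : R)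
  (hr : (0 < r)%N)
  (hU : orth_proj_rank r PU) (hV : orth_proj_rank r PV)
  (hmuU : coherence r PU <= mu0) (hmuV : coherence r PV <= mu0)
  (sX sZ : R) (hsX : is_spec_norm X sX) (hsZ : is_spec_norm (Zmx PU PV X) sZ) :
  sZ <= 2 * mu0 * r%:R / n%:R * sX.
Proof.
set m := mu0 * r%:R / n%:R.
have m_ge0 : 0 <= m.
  by rewrite !mulr_ge0 ?invr_ge0 ?ler0n // (le_trans (coherence_ge0 r PU)).
have [opX _] := hsX; have sX_ge0 := spec_norm_ge0 hsX.
apply: hsZ.2; rewrite Zmx_diag_decomp.
have -> : 2 * mu0 * r%:R / n%:R * sX = m * sX + 1 * sX * m by rewrite /m; ring.
apply: op_boundD; first exact: op_boundM (proj_diag_op_bound hr hU hmuU) opX.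
apply: op_boundM; first by rewrite mulr_ge0.
  exact: op_boundM (proj_codiag_op_bound hU) opX.
exact: proj_diag_op_bound hr hV hmuV.
Qed.
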